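(* (Sector condition.) For every $\alpha>0$, $N\ge1$ and every pair of functions $F,H:E_N\to\mathbb R$, $$\langle\mathcal LF,H\rangle_{\mu_N}^2\le 4L^2\,D_N(F)\,D_N(H).$$
   Context: Fix an integer $L\ge2$ and let $\mathbb T_L=\mathbb Z/L\mathbb Z$. Fix $\alpha>0$; set $a(0)=1$, $a(n)=n^\alpha$ for $n\ge1$, $g(0)=0$ and $g(n)=a(n)/a(n-1)$ for $n\ge1$. $E_N=\{\eta\in\{0,1,2,\dots\}^{\mathbb T_L}:\sum_x\eta_x=N\}$; $\sigma^{x,y}\eta$ is obtained from $\eta$ by moving one particle from $x$ to $y$. Generator: $(\mathcal LF)(\eta)=\sum_{x\in\mathbb T_L}g(\eta_x)[F(\sigma^{x,x+1}\eta)-F(\eta)]$. Invariant measure $\mu_N(\eta)=W_N^{-1}\prod_xa(\eta_x)^{-1}$, $W_N=\sum_{\zeta\in E_N}\prod_xa(\zeta_x)^{-1}$; $\langle\cdot,\cdot\rangle_{\mu_N}$ is the $L^2(\mu_N)$ inner product; $D_N(F)=\frac12\sum_x\sum_{\eta\in E_N}\mu_N(\eta)g(\eta_x)[F(\sigma^{x,x+1}\eta)-F(\eta)]^2$. *)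

From Stdlib Require Import Reals.
From mathcomp Require Import all_boot.
Set Implicit Arguments. Unset Strict Implicit. Unset Printing Implicit Defensive.
Local Open Scope R_scope.

(* Configurations on the torus T_L = 'I_L (successor: ordS, i.e. x+1 mod L).
   A configuration with N particles has each eta_x <= N, so the state space
   E_N is identified with the configurations eta : {ffun 'I_L -> 'I_N.+1}
   with \sum_x eta_x = N. *)
Definition conf (L N : nat) := {ffun 'I_L -> 'I_N.+1}.

Definition inE_N (L N : nat) (eta : conf L N) : bool :=
  (\sum_(x < L) (nat_of_ord (eta x)) == N)%N.

Definition Rsum {I : Type} (s : seq I) (f : I -> R) : R :=
  foldr (fun i acc => Rplus (f i) acc) R0 s.
Definition Rprod {I : Type} (s : seq I) (f : I -> R) : R :=
  foldr (fun i acc => Rmult (f i) acc) R1 s.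

Definition E_N (L N : nat) : seq (conf L N) := enum (@inE_N L N).

Definition a_fn (alpha : R) (n : nat) : R :=
  match n with O => R1 | _ => Rpower (INR n) alpha end.
Definition g_fn (alpha : R) (n : nat) : R :=
  match n with O => R0 | S m => (a_fn alpha n / a_fn alpha m) end.

(* sigma^{x,y} eta : move one particle from x to y.  (When eta_x = 0 the
   result is irrelevant, since it is always multiplied by g(0) = 0.) *)
Definition sigma (L N : nat) (x y : 'I_L) (eta : conf L N) : conf L N :=
  [ffun z => if z == x then inord (eta x).-1
             else if z == y then inord (eta y).+1 else eta z].

Definition nxt (L : nat) (x : 'I_L) : 'I_L := ordS x.

Definition weight (alpha : R) (L N : nat) (eta : conf L N) : R :=
  Rprod (enum 'I_L) (fun x => / a_fn alpha (eta x)).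
Definition W_N (alpha : R) (L N : nat) : R :=
  Rsum (E_N L N) (@weight alpha L N).
Definition mu_N (alpha : R) (L N : nat) (eta : conf L N) : R :=
  (/ W_N alpha L N * weight alpha eta).

Definition gen (alpha : R) (L N : nat) (F : conf L N -> R) (eta : conf L N) : R :=
  Rsum (enum 'I_L) (fun x =>
    g_fn alpha (eta x) * (F (sigma x (nxt x) eta) - F eta)).

Definition inner (alpha : R) (L N : nat) (F H : conf L N -> R) : R :=
  Rsum (E_N L N) (fun eta => mu_N alpha eta * F eta * H eta).

Definition dirichlet (alpha : R) (L N : nat) (F : conf L N -> R) : R :=
  (/ 2 * Rsum (enum 'I_L) (fun x => Rsum (E_N L N) (fun eta =>
     mu_N alpha eta * g_fn alpha (eta x) *
     (F (sigma x (nxt x) eta) - F eta) ^ 2))).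

From Pilot Require Import Defs.
From Stdlib Require Import Reals.
From mathcomp Require Import all_boot all_order all_algebra Rstruct ring lra zify.
Set Implicit Arguments. Unset Strict Implicit. Unset Printing Implicit Defensive.
Import Order.TTheory GRing.Theory Num.Theory.

(* Both sides are sums over the "active" pairs s = (eta, x) (configuration,
   occupied site), weighted by the stationary flux mu_N(eta) g(eta_x), of
   expressions in the increments F(jump s) - F(s) along the map [jump]
   that moves the particle at x to x+1 and marks x+1.  Two facts about
   this weighted dynamical system drive the proof:
   - [jump] preserves the active states and the flux (detailed balance of
     the product measure: a(n+1)/a(n) compensates the change of weight);
   - [jump] is L-periodic: the marked particle travels once around the ring.
   The abstract core [periodic_sector] shows that ANY weight-preserving,
   n-periodic finite dynamics satisfies (E[dU * V])^2 <= n^2 E[dU^2] E[dV^2]: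
   average over the orbit, use that increments along a period sum to zero,
   and apply Cauchy-Schwarz twice.  The theorem follows with n = L, after
   rewriting the inner product and the Dirichlet forms as such sums. *)

Local Open Scope ring_scope.

(* [sigma] also names a summation operator of the Reals library. *)
Local Notation sigma := Defs.sigma.

Lemma RsumE (I : Type) (s : seq I) (f : I -> R) : Rsum s f = \sum_(i <- s) f i.
Proof. by elim: s => [|i s IH] /=; rewrite ?big_nil // big_cons IH. Qed.

Lemma RprodE (I : Type) (s : seq I) (f : I -> R) : Rprod s f = \prod_(i <- s) f i.
Proof. by elim: s => [|i s IH] /=; rewrite ?big_nil // big_cons IH. Qed.

(* Weighted Cauchy-Schwarz inequality over a finite index set, from the
   Lagrange identity
   sum_(i,j) w_i w_j (a_i b_j - a_j b_i)^2 = 2 (sum w a^2)(sum w b^2) - 2 (sum w a b)^2. *)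
Lemma weighted_cauchy_schwarz (R : realFieldType) (I : finType) (P : pred I)
    (w a b : I -> R) :
  (forall i, P i -> 0 <= w i) ->
  (\sum_(i | P i) w i * (a i * b i)) ^+ 2 <=
  (\sum_(i | P i) w i * a i ^+ 2) * (\sum_(i | P i) w i * b i ^+ 2).
Proof.
move=> w_ge0.
set Sab := \sum_(i | P i) w i * (a i * b i).
set Saa := \sum_(i | P i) w i * a i ^+ 2.
set Sbb := \sum_(i | P i) w i * b i ^+ 2.
have lagrange : \sum_(i | P i) \sum_(j | P j) w i * w j * (a i * b j - a j * b i) ^+ 2
    = 2 * (Saa * Sbb) - 2 * Sab ^+ 2.
  have product (f g : I -> R) : \sum_(i | P i) \sum_(j | P j) f i * g j
      = (\sum_(i | P i) f i) * (\sum_(i | P i) g i) by rewrite big_distrlr.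
  transitivity (\sum_(i | P i) \sum_(j | P j) (w i * a i ^+ 2) * (w j * b j ^+ 2)
      + \sum_(i | P i) \sum_(j | P j) (w j * a j ^+ 2) * (w i * b i ^+ 2)
      - 2 * \sum_(i | P i) \sum_(j | P j) (w i * (a i * b i)) * (w j * (a j * b j))).
    rewrite mulr_sumr -big_split -sumrB /=; apply: eq_bigr => i _.
    rewrite mulr_sumr -big_split -sumrB /=; apply: eq_bigr => j _; ring.
  by rewrite [X in _ + X - _]exchange_big /= !product -expr2 -/Saa -/Sbb -/Sab; ring.
have : 0 <= \sum_(i | P i) \sum_(j | P j) w i * w j * (a i * b j - a j * b i) ^+ 2.
  apply: sumr_ge0 => i Pi; apply: sumr_ge0 => j Pj.
  by rewrite mulr_ge0 ?sqr_ge0 // mulr_ge0 ?w_ge0.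
rewrite lagrange; lra.
Qed.

Definition wsum (R : pzSemiRingType) (S : finType) (P : pred S) (w f : S -> R) : R :=
  \sum_(s | P s) w s * f s.

Definition incr (R : zmodType) (S : Type) (T : S -> S) (u : S -> R) (s : S) : R :=
  u (T s) - u s.

(* Idea: averaging over the n translates along the orbit of s, and since the
   increments of u along a full period sum to zero, E[incr u * v] is an
   average of sums  sum_k incr u (T^k s) (v (T^k s) - v s),  each bounded by
   the product of the total variations of u and v along the orbit; then
   Cauchy-Schwarz twice. *)
Section PeriodicSector.
Variables (R : realFieldType) (S : finType) (P : pred S) (w : S -> R) (T : S -> S) (n : nat).
Hypotheses (w_ge0 : forall s, P s -> 0 <= w s)
           (P_T : forall s, P s -> P (T s))
           (w_T : forall s, P s -> w (T s) = w s)
           (n_gt0 : (0 < n)%N)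
           (T_periodic : forall s, P s -> iter n T s = s).

Local Notation E := (wsum P w).
Local Notation orbit_incr u s k := (incr T u (iter k T s)).

Lemma P_iter k s : P s -> P (iter k T s).
Proof. by move=> Ps; elim: k => //= k IH; apply: P_T. Qed.

Lemma wsum_ge0 (f : S -> R) : (forall s, P s -> 0 <= f s) -> 0 <= E f.
Proof. by move=> f_ge0; apply: sumr_ge0 => s Ps; rewrite mulr_ge0 ?w_ge0 ?f_ge0. Qed.

Lemma wsumZ (c : R) (f : S -> R) : E (fun s => c * f s) = c * E f.
Proof. by rewrite /wsum mulr_sumr; apply: eq_bigr => s _; rewrite mulrCA. Qed.

(* Invariance of the weighted sum under the dynamics: by periodicity,
   [iter n.-1 T] is an inverse of [T] on [P], so [T] permutes [P]. *)
Lemma wsum_T (f : S -> R) : E (f \o T) = E f.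
Proof.
pose Tinv := iter n.-1 T.
have TinvK s : P s -> Tinv (T s) = s by move=> Ps; rewrite /Tinv -iterSr prednK // T_periodic.
have TKinv s : P s -> T (Tinv s) = s by move=> Ps; rewrite /Tinv -iterS prednK // T_periodic.
symmetry; rewrite /wsum (reindex_onto T Tinv) /=; last exact: TKinv.
apply: eq_big => [s | s /andP [PTs /eqP Tinv_s]].
  apply/idP/idP => [/andP [PTs /eqP <-] | Ps]; first exact: P_iter.
  by rewrite P_T // TinvK ?eqxx.
have Ps : P s by rewrite -Tinv_s; apply: P_iter.
by rewrite w_T.
Qed.

Lemma wsum_iter (f : S -> R) k : E (fun s => f (iter k T s)) = E f.
Proof.
elim: k => [|k IH] //; rewrite -[RHS]IH -(wsum_T (fun s => f (iter k T s))).
by apply: eq_bigr => s _; rewrite iterSr.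
Qed.

Lemma orbit_incr_sum0 (u : S -> R) s :
  P s -> \sum_(k < n) orbit_incr u s k = 0.
Proof.
move=> Ps; rewrite -(big_mkord xpredT (fun k => orbit_incr u s k)).
rewrite (telescope_sumr (fun k => u (iter k T s))) //.
by rewrite T_periodic // subrr.
Qed.

Definition variation (u : S -> R) (s : S) : R := \sum_(k < n) `|orbit_incr u s k|.

(* Since the increments of [u] sum to zero, pairing them with [v] only sees
   the deviations [v (T^k s) - v s], each bounded by the variation of [v]. *)
Lemma orbit_pairing_bound (u v : S -> R) s : P s ->
  `|\sum_(k < n) orbit_incr u s k * v (iter k T s)| <= variation u s * variation v s.
Proof.
move=> Ps.
have deviation (k : 'I_n) : `|v (iter k T s) - v s| <= variation v s.
  rewrite -(telescope_sumr (fun j => v (iter j T s)) (leq0n k)) /variation.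
  rewrite -(big_mkord xpredT (fun j => `|orbit_incr v s j|)).
  rewrite [X in _ <= X](big_cat_nat (leq0n k) (ltnW (ltn_ord k))) /=.
  apply: le_trans (ler_norm_sum _ _ _) _.
  by rewrite lerDl; apply: sumr_ge0 => j _.
have -> : \sum_(k < n) orbit_incr u s k * v (iter k T s)
        = \sum_(k < n) orbit_incr u s k * (v (iter k T s) - v s).
  rewrite [RHS](eq_bigr _ (fun k _ => mulrBr _ _ _)) sumrB -mulr_suml.
  by rewrite orbit_incr_sum0 // mul0r subr0.
rewrite /variation mulr_suml; apply: le_trans (ler_norm_sum _ _ _) _.
by apply: ler_sum => k _; rewrite normrM ler_wpM2l.
Qed.

(* Cauchy-Schwarz along the orbit, with unit weights. *)
Lemma variation_sq (u : S -> R) s :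
  variation u s ^+ 2 <= n%:R * \sum_(k < n) orbit_incr u s k ^+ 2.
Proof.
have cs := @weighted_cauchy_schwarz _ 'I_n xpredT (fun=> 1)
              (fun k => `|orbit_incr u s k|) (fun=> 1) (fun _ _ => ler01).
have e1 : \sum_(k < n | xpredT k) 1 * (`|orbit_incr u s k| * 1) = variation u s.
  by apply: eq_bigr => k _; rewrite mul1r mulr1.
have e2 : \sum_(k < n | xpredT k) 1 * `|orbit_incr u s k| ^+ 2
          = \sum_(k < n) orbit_incr u s k ^+ 2.
  by apply: eq_bigr => k _; rewrite mul1r real_normK ?num_real.
have e3 : \sum_(k < n | xpredT k) 1 * 1 ^+ 2 = n%:R :> R.
  by rewrite (eq_bigr (fun=> 1)) ?sumr_const ?card_ord // => k _; rewrite expr1n mulr1.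
by rewrite e1 e2 e3 mulrC in cs.
Qed.

Lemma wsum_orbit_sum (f : S -> R) :
  E (fun s => \sum_(k < n) f (iter k T s)) = n%:R * E f.
Proof.
rewrite /wsum (eq_bigr (fun s => \sum_(k < n) w s * f (iter k T s))) => [|s _]; last first.
  by rewrite mulr_sumr.
rewrite exchange_big /= (eq_bigr (fun=> E f)) => [|k _]; last exact: wsum_iter.
by rewrite sumr_const card_ord mulr_natl.
Qed.

Lemma wsum_variation_sq (u : S -> R) :
  E (fun s => variation u s ^+ 2) <= n%:R ^+ 2 * E (fun s => incr T u s ^+ 2).
Proof.
apply: (@le_trans _ _ (E (fun s => n%:R * \sum_(k < n) orbit_incr u s k ^+ 2))).
  by apply: ler_sum => s Ps; rewrite ler_wpM2l ?w_ge0 ?variation_sq.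
by rewrite wsumZ (wsum_orbit_sum (fun s => incr T u s ^+ 2)) mulrA -expr2.
Qed.

Theorem periodic_sector (u v : S -> R) :
  E (fun s => incr T u s * v s) ^+ 2 <=
  n%:R ^+ 2 * E (fun s => incr T u s ^+ 2) * E (fun s => incr T v s ^+ 2).
Proof.
set I := E (fun s => incr T u s * v s).
set Vuv := E (fun s => variation u s * variation v s).
set Du := E (fun s => incr T u s ^+ 2); set Dv := E (fun s => incr T v s ^+ 2).
have averaged : `|n%:R * I| <= Vuv.
  rewrite -wsum_orbit_sum; apply: le_trans (ler_norm_sum _ _ _) _.
  apply: ler_sum => s Ps; rewrite normrM ger0_norm ?w_ge0 //.
  by rewrite ler_wpM2l ?w_ge0 ?orbit_pairing_bound.
have schwarz : Vuv ^+ 2 <= E (fun s => variation u s ^+ 2) * E (fun s => variation v s ^+ 2).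
  exact: weighted_cauchy_schwarz.
have sq_ge0 (f : S -> R) : 0 <= E (fun s => f s ^+ 2).
  by apply: wsum_ge0 => s _; apply: sqr_ge0.
have n2_gt0 : 0 < (n%:R : R) ^+ 2 by rewrite exprn_gt0 // ltr0n.
rewrite -(ler_pM2l n2_gt0) -exprMn -[X in X <= _]real_normK ?num_real //.
apply: le_trans (_ : _ <= Vuv ^+ 2) _.
  by rewrite !expr2; exact: (ler_pM (normr_ge0 _) (normr_ge0 _) averaged averaged).
apply: (le_trans schwarz).
have -> : n%:R ^+ 2 * (n%:R ^+ 2 * Du * Dv) = (n%:R ^+ 2 * Du) * (n%:R ^+ 2 * Dv) by ring.
exact: ler_pM (sq_ge0 _) (sq_ge0 _) (wsum_variation_sq u) (wsum_variation_sq v).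
Qed.

End PeriodicSector.

Section Jump.
Variables (L N : nat).
Local Notation conf := (conf L N).

Lemma nxt_neq (x : 'I_L) : (1 < L)%N -> nxt x != x.
Proof.
move=> L_gt1; apply/eqP => /(congr1 val) /=; case: x => x x_lt /=.
case: (ltngtP x.+1 L) => [lt | gt | eq]; [by rewrite modn_small //; lia | lia |].
by rewrite eq modnn => x0; move: L_gt1; rewrite -eq -x0.
Qed.

Variables (eta : conf) (a b : 'I_L).
Hypotheses (eta_in : inE_N eta) (ab : a != b) (a_occ : (0 < eta a)%N).

Lemma sigma_occupation z :
  (sigma a b eta z + (z == a) = eta z + (z == b))%N.
Proof.
have occ_ab : (eta a + eta b <= N)%N.
  rewrite -[X in (_ <= X)%N](eqP eta_in) (bigD1 a) //= (bigD1 b) /=; last by rewrite eq_sym.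
  by rewrite addnA leq_addr.
rewrite /sigma ffunE; case: (eqVneq z a) => [-> | za].
  rewrite (negPf ab) inordK; last by rewrite ltnS (leq_trans (leq_pred _)) // -ltnS.
  by rewrite addn1 addn0 prednK.
case: (eqVneq z b) => [-> | //]; rewrite inordK ?addn0 ?addn1 //; lia.
Qed.

Lemma sigma_in : inE_N (sigma a b eta).
Proof.
have count_ind (c : 'I_L) : (\sum_(x < L) (x == c))%N = 1%N.
  by rewrite (bigD1 c) //= eqxx big1 // => x /negPf ->.
have : (\sum_(z < L) (sigma a b eta z + (z == a)) = \sum_(z < L) (eta z + (z == b)))%N.
  by apply: eq_bigr => z _; rewrite sigma_occupation.
by rewrite !big_split /= !count_ind (eqP eta_in) => /eqP; rewrite eqn_add2r.
Qed.

Lemma sigma_target_occ : (0 < sigma a b eta b)%N.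
Proof. by have := sigma_occupation b; rewrite eqxx eq_sym (negPf ab); lia. Qed.
End Jump.

Section Weights.
Variables (alpha : R) (L N : nat).

Lemma a_gt0 n : 0 < a_fn alpha n.
Proof. by case: n => [|n] /=; apply/RltP; [exact: Rlt_0_1 | exact: exp_pos]. Qed.

Lemma g_fnS n : g_fn alpha n.+1 = a_fn alpha n.+1 / a_fn alpha n.
Proof. by []. Qed.

Lemma g_ge0 n : 0 <= g_fn alpha n.
Proof. by case: n => [|n]; rewrite ?lexx // g_fnS divr_ge0 ?ltW ?a_gt0. Qed.

Lemma weightE (eta : conf L N) :
  weight alpha eta = \prod_(x < L) (a_fn alpha (eta x))^-1.
Proof. by rewrite /weight RprodE big_enum. Qed.

Lemma weight_gt0 (eta : conf L N) : 0 < weight alpha eta.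
Proof. by rewrite weightE; apply: prodr_gt0 => x _; rewrite invr_gt0 a_gt0. Qed.

Lemma mu_N_ge0 (eta : conf L N) : 0 <= mu_N alpha eta.
Proof.
rewrite /mu_N !RealsE; apply: mulr_ge0; last exact/ltW/weight_gt0.
by rewrite invr_ge0 /W_N RsumE; apply: sumr_ge0 => zeta _; apply/ltW/weight_gt0.
Qed.

(* Detailed balance of a single jump from [a] to [b]: the weight of the
   configuration times the rate of the jump is the same for the jump and for
   its reversal, since a(n+1)/a(n) compensates the change of weight. *)
Lemma weight_sigma (eta : conf L N) (a b : 'I_L) :
  inE_N eta -> a != b -> (0 < eta a)%N ->
  weight alpha (sigma a b eta) * g_fn alpha (sigma a b eta b) =
  weight alpha eta * g_fn alpha (eta a).
Proof.
move=> eta_in ab a_occ.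
have occ := sigma_occupation eta_in ab a_occ.
have occ_a : nat_of_ord (sigma a b eta a) = (eta a).-1.
  by have := occ a; rewrite eqxx (negPf ab); lia.
have occ_b : nat_of_ord (sigma a b eta b) = (eta b).+1.
  by have := occ b; rewrite eqxx eq_sym (negPf ab); lia.
have split2 (f : 'I_L -> R) : \prod_(x < L) f x
    = f a * (f b * \prod_(x < L | (x != a) && (x != b)) f x).
  by rewrite (bigD1 a) //= (bigD1 b) //= eq_sym.
rewrite !weightE !split2 occ_a occ_b.
have -> : \prod_(x < L | (x != a) && (x != b)) (a_fn alpha (sigma a b eta x))^-1 =
          \prod_(x < L | (x != a) && (x != b)) (a_fn alpha (eta x))^-1.
  apply: eq_bigr => x /andP [xa xb].
  by have := occ x; rewrite (negPf xa) (negPf xb) !addn0 => ->.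
rewrite -{2 3}(prednK a_occ) !g_fnS.
have := a_gt0 (eta a).-1; have := a_gt0 (eta a).-1.+1.
have := a_gt0 (eta b); have := a_gt0 (eta b).+1.
move: (a_fn alpha (eta a).-1) (a_fn alpha (eta a).-1.+1).
move: (a_fn alpha (eta b)) (a_fn alpha (eta b).+1) => A3 A4 A1 A2 hA4 hA3 hA2 hA1.
by field; rewrite !gt_eqF.
Qed.

End Weights.

(* The zero-range process as a weighted dynamical system on pairs
   (configuration, site): [jump] moves one particle from the marked site to
   the next one and marks that site; the active states are those where the
   marked site is occupied, weighted by the stationary flux mu_N(eta) g(eta_x). *)
Section JumpDynamics.
Variables (alpha : R) (L N : nat).
Hypothesis L_gt1 : (1 < L)%N.

Definition state := (conf L N * 'I_L)%type.
Definition jump (s : state) : state := (sigma s.2 (nxt s.2) s.1, nxt s.2).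
Definition active (s : state) : bool := inE_N s.1 && (0 < s.1 s.2)%N.
Definition flux (s : state) : R := mu_N alpha s.1 * g_fn alpha (s.1 s.2).

Lemma flux_ge0 s : 0 <= flux s.
Proof. by rewrite /flux RmultE mulr_ge0 ?mu_N_ge0 ?g_ge0. Qed.

Lemma active_jump s : active s -> active (jump s).
Proof.
case: s => eta x /andP [eta_in x_occ]; have ne := nxt_neq x L_gt1; rewrite eq_sym in ne.
by rewrite /active /= sigma_in // sigma_target_occ.
Qed.

Lemma flux_jump s : active s -> flux (jump s) = flux s.
Proof.
case: s => eta x /andP [eta_in x_occ]; have ne := nxt_neq x L_gt1; rewrite eq_sym in ne.
rewrite /flux /mu_N /= !RmultE -!mulrA; congr (_ * _).
exact: weight_sigma.
Qed.

Lemma iter_jump k s : active s ->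
  [/\ active (iter k jump s), val (iter k jump s).2 = ((s.2 + k) %% L)%N &
      forall z, ((iter k jump s).1 z + (z == s.2) = s.1 z + (z == (iter k jump s).2))%N].
Proof.
move=> s_act; elim: k => [|k [act_k site_k occ_k]] /=.
  by split=> //; rewrite addn0 modn_small.
split; first exact: active_jump.
  by rewrite /= site_k -addn1 modnDml -addnA addn1.
move: act_k => /andP [in_k occ_k']; have ne := nxt_neq (iter k jump s).2 L_gt1.
rewrite eq_sym in ne => z; have := sigma_occupation in_k ne occ_k' z; have := occ_k z; lia.
Qed.

(* Along L jumps the particle goes once around the ring: jump is L-periodic. *)
Lemma jump_periodic s : active s -> iter L jump s = s.
Proof.
move=> s_act; have [_ site occ] := iter_jump L s_act.
have site_L : (iter L jump s).2 = s.2.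
  by apply: val_inj; rewrite site modnDr modn_small.
move: (iter L jump s) site_L occ => [zeta y]; case: s {s_act site} => eta x /= -> occ.
by congr pair; apply/ffunP => z; apply/val_inj/eqP; rewrite -(eqn_add2r (z == x)) occ.
Qed.

End JumpDynamics.

Section Forms.
Variables (alpha : R) (L N : nat).
Local Notation E := (wsum (@active L N) (@flux alpha L N)).

(* A double sum over E_N and the sites, weighted by the jump rates, is a
   weighted sum over the active states (inactive sites have rate g(0) = 0). *)
Lemma rate_sum_wsum (f : state L N -> R) :
  \sum_(eta <- E_N L N) \sum_(x < L) mu_N alpha eta * g_fn alpha (eta x) * f (eta, x)
  = E f.
Proof.
rewrite /E_N big_enum /= pair_big /wsum [LHS]big_mkcond [RHS]big_mkcond /=.
apply: eq_bigr => -[eta x] _; rewrite /active /flux /= unfold_in andbT -/(inE_N eta).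
case: (inE_N eta) => //; case: (posnP (eta x)) => [-> | //].
by rewrite /g_fn RmultE mulr0 mul0r.
Qed.

Lemma inner_gen_wsum (F H : conf L N -> R) :
  inner alpha (gen alpha F) H = E (fun s => incr (@jump L N) (F \o fst) s * H s.1).
Proof.
rewrite /inner RsumE -rate_sum_wsum; apply: eq_bigr => eta _.
rewrite /gen RsumE big_enum /= !RealsE mulr_sumr mulr_suml; apply: eq_bigr => x _.
by rewrite /incr !mulrA.
Qed.

Lemma dirichlet_wsum (F : conf L N -> R) :
  dirichlet alpha F = 2^-1 * E (fun s => incr (@jump L N) (F \o fst) s ^+ 2).
Proof.
rewrite /dirichlet RsumE -rate_sum_wsum RealsE; congr (_ * _).
rewrite big_enum /= exchange_big /=; apply: eq_bigr => eta _.
rewrite RsumE; apply: eq_bigr => x _.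
by rewrite !RealsE /incr /= expr2 mulr1.
Qed.

End Forms.

Local Open Scope R_scope.

(* The sector condition. *)
Theorem lemma3p1 (L : nat) (hL : (2 <= L)%N) (alpha : R) (halpha : (0 < alpha))
  (N : nat) (hN : (1 <= N)%N) (F H : conf L N -> R) :
  inner alpha (gen alpha F) H ^ 2
     <= 4 * INR L ^ 2 * dirichlet alpha F * dirichlet alpha H.
Proof.
have sector := periodic_sector (fun s _ => @flux_ge0 alpha L N s) (active_jump hL)
  (flux_jump alpha hL) (ltnW hL) (jump_periodic hL) (F \o fst) (H \o fst).
(* with D_N = E[(incr)^2] / 2, the factor L^2 becomes 4 L^2 *)
rewrite inner_gen_wsum !dirichlet_wsum; apply/RleP.
rewrite !RpowE !RmultE IZRposE !INRE /=; apply: (le_trans sector).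
by rewrite le_eqVlt; apply/orP; left; apply/eqP; field.
Qed.
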